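(* Every indecomposable continuum $X$ that is $d(X)$-Baire is coastal: for every $x\in X$ there exists $p\in X$ with $p\neq x$ such that $\kappa(x;p)$ is dense in $X$.
   Context: A continuum is a nondegenerate compact connected Hausdorff space; it is indecomposable if it is not the union of two proper subcontinua. $d(X)$ is the least cardinality of a dense subset of $X$; $X$ is $\alpha$-Baire if every family of $\alpha$ many open dense subsets has dense intersection. $\kappa(x;p)$ denotes the union of all subcontinua $M$ of $X$ with $x\in M$, $M\neq X$ and $p\notin M$. *)

From HB Require Import structures.
From mathcomp Require Import all_boot all_order all_algebra.
From mathcomp Require Import all_classical all_reals all_analysis.
Set Implicit Arguments. Unset Strict Implicit. Unset Printing Implicit Defensive.
Local Open Scope classical_set_scope.

Section ContinuumDefs.
Variable T : topologicalType.

Definition is_continuum :=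
  [/\ hausdorff_space T, compact [set: T], connected [set: T]
    & exists a b : T, a <> b].

Definition subcontinuum (M : set T) :=
  [/\ M !=set0, compact M & connected M].

Definition indecomposable :=
  ~ exists A B : set T, [/\ subcontinuum A, subcontinuum B, A <> setT,
                            B <> setT & A `|` B = setT].

(* D is a dense set of least cardinality, i.e. #|D| = d(X). *)
Definition density_witness (D : set T) :=
  dense D /\ forall D' : set T, dense D' -> (D #<= D')%card.

Definition density_Baire :=
  exists D : set T, density_witness D /\
    forall (I : Type) (J : set I) (F : I -> set T),
      (J #= D)%card ->
      (forall i, J i -> open (F i) /\ dense (F i)) ->
      dense (\bigcap_(i in J) F i).

Definition kappa (x p : T) : set T :=
  [set y | exists M : set T,
     [/\ subcontinuum M, M x, M <> setT, ~ M p & M y]].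

End ContinuumDefs.

From mathcomp Require Import all_boot all_order all_algebra.
From mathcomp Require Import all_classical all_reals all_analysis.
Local Open Scope classical_set_scope.

(* Let [composant x] be the union of the proper subcontinua containing [x].
   Boundary bumping makes it dense: in a compact Hausdorff space
   quasi-components are connected, and the quasi-component of [x] in a proper
   closed set [K] is not contained in any open subset of [K].
   So if some [p <> x] lies outside [composant x], then
   [composant x `<=` kappa x p] is dense.  Otherwise each point [d] of a dense
   set [D] of size d(X) lies in a proper subcontinuum [Mf d] containing [x].
   In an indecomposable continuum a proper subcontinuum [M] is nowhere dense,
   since a splitting of [~` M] or a proper closure of [~` M] would decompose the
   space; so by d(X)-Baireness some [p] avoids every [Mf d], and then [p <> x]
   and [D `<=` kappa x p]. *)

Section Topology.
Context {T : topologicalType}.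
Implicit Types A B F G : set T.

Lemma denseS A B : A `<=` B -> dense A -> dense B.
Proof.
by move=> AB dA O O0 oO; have [z [Oz Az]] := dA O O0 oO; exists z; split; [|exact: AB].
Qed.

Lemma dense_closureT (S : set T) : closure S = setT -> dense S.
Proof.
move=> clST O [y Oy] oO; have : closure S y by rewrite clST.
by move/(_ O (open_nbhs_nbhs (conj oO Oy))) => [w [Sw Ow]]; exists w.
Qed.

Lemma connected_clopenT A : connected [set: T] -> open A -> closed A ->
  A !=set0 -> A = setT.
Proof. by move=> conT oA clA A0; apply: conT => //; exists A => //; rewrite setTI. Qed.

Lemma separated_open {A B O : set T} : separated A B -> open O ->
  A `<=` O -> O `<=` A `|` B -> open A.
Proof.
move=> [_ AclB0] oO AO OAB.
have -> : A = O `&` ~` closure B.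
  apply/seteqP; split => [z Az | z [Oz nclBz]].
    by split; [exact: AO | move=> clBz; rewrite -[False]/(set0 z) -AclB0].
  by have [//|Bz] := OAB z Oz; exfalso; apply/nclBz/subset_closure.
exact/openI/closed_openC/closed_closure.
Qed.

Lemma connected_setU_open (M A : set T) : connected [set: T] -> connected M ->
  M !=set0 -> open A -> closed (M `|` A) -> connected (M `|` A).
Proof.
move=> conT conM [m Mm] oA clMA; apply/connectedP => E [E0 MAE sepE].
wlog ME : E E0 MAE sepE / M `<=` E false.
  move=> wlog_ME; have [|ME|ME] := connected_subset sepE _ conM.
  - by rewrite -MAE; exact: subsetUl.
  - exact: wlog_ME.
  - apply: (wlog_ME (E \o negb)) => //=.
    + by rewrite MAE setUC.
    + by rewrite separatedC.
have E01 := separated_disjoint sepE.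
have E1A : E true `<=` A.
  move=> z E1z; have : (M `|` A) z by rewrite MAE; right.
  case=> // Mz; exfalso; rewrite -[False]/(set0 z) -E01.
  by split => //; exact: ME.
have oE1 : open (E true).
  have sepE' : separated (E true) (E false) by rewrite separatedC.
  by apply: (separated_open sepE' oA E1A) => z Az; rewrite setUC -MAE; right.
have clE1 : closed (E true).
  apply/closure_id/seteqP; split => [|z clE1z]; first exact: subset_closure.
  have : closure (M `|` A) z by apply: closureS clE1z; rewrite MAE; exact: subsetUr.
  rewrite -(closure_id _).1 // MAE => -[E0z|//].
  by exfalso; rewrite -[False]/(set0 z) -(proj2 sepE).
have E1T := connected_clopenT (E true) conT oE1 clE1 (E0 true).
have : (E false `&` E true) m by split; [exact: ME | rewrite E1T].
by rewrite E01.
Qed.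

Lemma closed_subcontinuum A : compact [set: T] -> closed A -> A !=set0 ->
  connected A -> subcontinuum A.
Proof. by move=> cT clA A0 conA; split => //; exact: subclosed_compact clA cT _. Qed.

Lemma subcontinuum_set1 (x : T) : subcontinuum [set x].
Proof. by split; [exists x | exact: compact_set1 | exact: connected1]. Qed.

Lemma set1_neqT (x : T) : (exists a b : T, a <> b) -> [set x] <> setT.
Proof.
move=> [a [b ab]] xT; apply: ab.
have xa : [set x] a by rewrite xT.
have xb : [set x] b by rewrite xT.
by rewrite xa xb.
Qed.

Lemma compact_bigcap_sub_open (Fm : set (set T)) G : compact [set: T] ->
  Fm !=set0 -> (forall F, Fm F -> closed F) -> setI_closed Fm -> open G ->
  \bigcap_(F in Fm) F `<=` G -> exists2 F, Fm F & F `<=` G.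
Proof.
move=> cT [F0 FmF0] clFm IFm oG FmG; apply: contrapT => noF.
have outG F : Fm F -> F `&` ~` G !=set0.
  move=> FmF; apply/set0P/negP => /eqP/subsets_disjoint FG.
  exact: noF (ex_intro2 _ _ F FmF FG).
pose Phi := filter_from Fm (fun F => F `&` ~` G).
have Phi_filter : Filter Phi.
  apply: filter_from_filter; first by exists F0.
  move=> F1 F2 FmF1 FmF2; exists (F1 `&` F2); first exact: IFm.
  by move=> z [[? ?] ?].
have [z [_ Phiz]] := cT Phi (filter_from_proper Phi_filter outG) filterT.
have FGz F : Fm F -> (F `&` ~` G) z.
  move=> FmF; have clFG : closed (F `&` ~` G).
    by apply: closedI; [exact: clFm | exact: open_closedC].
  move/closure_id: clFG => ->; rewrite clusterE in Phiz.
  by apply: Phiz; exists F.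
by apply: (FGz F0 FmF0).2; apply: FmG => F /FGz [].
Qed.

Lemma compact_normal_open A B : hausdorff_space T -> compact [set: T] ->
  closed A -> closed B -> A `&` B = set0 ->
  exists U W, [/\ open U, open W, A `<=` U, B `<=` W & U `&` W = set0].
Proof.
move=> hT cT clA clB AB0.
have nbhsA : set_nbhs A (~` B).
  apply/set_nbhsP; exists (~` B); split => //; first exact: closed_openC.
  exact/disjoints_subset.
have [V nbhsV clVB] := compact_normal hT cT clA nbhsA.
have [U [oU AU UV]] := (set_nbhsP _ _).1 nbhsV.
exists U, (~` closure V); split => //.
- exact/closed_openC/closed_closure.
- by move=> z Bz /clVB.
- by apply/disjoints_subset; rewrite setCK => z /UV /subset_closure.
Qed.

End Topology.

Section QuasiComponent.
Context {T : topologicalType}.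
Hypotheses (hT : hausdorff_space T) (cT : compact [set: T]).
Variables (K : set T) (x : T).
Hypotheses (clK : closed K) (Kx : K x).

Definition quasi_nbhs : set (set T) :=
  [set F | [/\ closed F, exists2 O, open O & F = K `&` O & F x]].

Definition quasi_component : set T := \bigcap_(F in quasi_nbhs) F.

Lemma quasi_nbhsT : quasi_nbhs K.
Proof. by split => //; exists setT; [exact: openT | rewrite setIT]. Qed.

Lemma quasi_nbhsI : setI_closed quasi_nbhs.
Proof.
move=> F1 F2 [clF1 [V1 oV1 F1E] F1x] [clF2 [V2 oV2 F2E] F2x]; split => //.
- exact: closedI.
- by exists (V1 `&` V2); [exact: openI | rewrite F1E F2E setIACA setIid].
Qed.

Lemma quasi_component_closed : closed quasi_component.
Proof. by apply: closed_bigI => F []. Qed.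

Lemma quasi_component_refl : quasi_component x.
Proof. by move=> F []. Qed.

Lemma quasi_component_sub : quasi_component `<=` K.
Proof. by move=> z; apply; exact: quasi_nbhsT. Qed.

Lemma quasi_component_sub_open G : open G -> quasi_component `<=` G ->
  exists2 F, quasi_nbhs F & F `<=` G.
Proof.
apply: compact_bigcap_sub_open => //; first by exists K; exact: quasi_nbhsT.
- by move=> F [].
- exact: quasi_nbhsI.
Qed.

(* Normality separates the two pieces by open sets; compactness then yields a
   relatively clopen neighbourhood of [x] inside the open set around [P]. *)
Lemma quasi_component_split {P R : set T} : closed P -> closed R -> P `&` R = set0 ->
  P `|` R = quasi_component -> P x -> R = set0.
Proof.
move=> clP clR PR0 PRQ Px.
have [U [W [oU oW PU RW UW0]]] := compact_normal_open _ _ hT cT clP clR PR0.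
have [F [clF [V oV FE] Fx] FUW] : exists2 F, quasi_nbhs F & F `<=` U `|` W.
  apply: quasi_component_sub_open; first exact: openU.
  by rewrite -PRQ => z [/PU|/RW]; [left | right].
have FU_nbhs : quasi_nbhs (F `&` U).
  split; last by split => //; exact: PU.
  - have -> : F `&` U = F `&` ~` W.
      apply/seteqP; split => z [Fz Uz]; split => //.
        by move=> Wz; rewrite -[False]/(set0 z) -UW0.
      by have [|] := FUW z Fz.
    by apply: closedI => //; exact: open_closedC.
  - by exists (V `&` U); [exact: openI | rewrite FE setIA].
have QU : quasi_component `<=` U by move=> z /(_ _ FU_nbhs) [].
rewrite -subset0 => z Rz.
have Qz : quasi_component z by rewrite -PRQ; right.
by rewrite -UW0; split; [exact: QU | exact: RW].
Qed.

Lemma quasi_component_connected : connected quasi_component.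
Proof.
move=> B B0 [C1 oC1 BE] [C2 clC2 BE'].
have clB : closed B by rewrite BE'; exact: closedI quasi_component_closed clC2.
pose B' := quasi_component `&` ~` C1.
have clB' : closed B' by exact: closedI quasi_component_closed (open_closedC oC1).
have BB'0 : B `&` B' = set0 by rewrite BE -subset0 => z [[_ ?] [_ ?]].
have BB'Q : B `|` B' = quasi_component by rewrite BE -setIUr setUv setIT.
have [Bx | nBx] := pselect (B x).
  by rewrite -BB'Q (quasi_component_split clB clB' BB'0 BB'Q Bx) setU0.
have B'x : B' x.
  split; first exact: quasi_component_refl.
  by move=> C1x; apply: nBx; rewrite BE; split => //; exact: quasi_component_refl.
have B'B0 : B' `&` B = set0 by rewrite setIC.
have B'BQ : B' `|` B = quasi_component by rewrite setUC.
by move: B0; rewrite (quasi_component_split clB' clB B'B0 B'BQ B'x) => -[].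
Qed.

(* A relatively clopen [F] with [F `<=` W `<=` K] would be clopen in [T]. *)
Lemma quasi_component_not_sub_open W : connected [set: T] -> K <> setT ->
  open W -> W `<=` K -> ~ quasi_component `<=` W.
Proof.
move=> conT KT oW WK QW.
have [F [clF [V oV FE] Fx] FW] := quasi_component_sub_open W oW QW.
have FWO : F = W `&` V.
  apply/seteqP; split => z; last by move=> [Wz Vz]; rewrite FE; split => //; exact: WK.
  by move=> Fz; split; [exact: FW | move: Fz; rewrite FE => -[]].
have FT : F = setT.
  by apply: connected_clopenT => //; [rewrite FWO; exact: openI | exists x].
apply: KT; apply/seteqP; split => // z _.
have Fz : F z by rewrite FT.
by move: Fz; rewrite FE => -[].
Qed.

End QuasiComponent.

Section Continuum.
Context {T : topologicalType}.
Hypotheses (hT : hausdorff_space T) (cT : compact [set: T])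
  (conT : connected [set: T]).
Implicit Types M : set T.

Lemma subcontinuum_closed {M} : subcontinuum M -> closed M.
Proof. by move=> [_ cM _]; exact: compact_closed. Qed.

Definition composant (x : T) : set T :=
  [set y | exists M, [/\ subcontinuum M, M x, M <> setT & M y]].

Lemma composant_refl x : (exists a b : T, a <> b) -> composant x x.
Proof.
by move=> ntT; exists [set x]; split => //; [exact: subcontinuum_set1 | exact: set1_neqT].
Qed.

(* Boundary bumping: the quasi-component of [x] in the complement of a small
   neighbourhood [U] of [y] is a proper subcontinuum reaching the open set [V]. *)
Lemma composant_dense x : (exists a b : T, a <> b) -> dense (composant x).
Proof.
move=> ntT V [y Vy] oV.
have [Vx | nVx] := pselect (V x).
  by exists x; split => //; exact: composant_refl.
have cl1 := accessible_closed_set1 (hausdorff_accessible hT).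
have clVx : closed (~` V `|` [set x]) by apply: closedU; [exact: open_closedC | exact: cl1].
have yVx0 : [set y] `&` (~` V `|` [set x]) = set0.
  by rewrite -subset0 => _ [-> [|yx]] //; apply: nVx; rewrite -yx.
have [U [W [oU oW yU VxW UW0]]] :=
  compact_normal_open _ _ hT cT (cl1 y) clVx yVx0.
have WU : W `<=` ~` U by apply/disjoints_subset; rewrite setIC.
have Ux : (~` U) x by apply/WU/VxW; right.
have clU : closed (~` U) by exact: open_closedC.
have UT : ~` U <> setT.
  by move=> UT; apply: (_ : (~` U) y) (yU y erefl); rewrite UT.
have [z Qz nWz] : exists2 z, quasi_component (~` U) x z & ~ W z.
  apply: contrapT => noz.
  apply: (quasi_component_not_sub_open cT _ _ clU Ux _ conT UT oW WU) => z Qz.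
  by apply: contrapT => nWz; apply: noz; exists z.
exists z; split; first by apply: contrapT => nVz; apply/nWz/VxW; left.
exists (quasi_component (~` U) x); split => //.
- apply: closed_subcontinuum cT (quasi_component_closed _ _) _ _.
    by exists x; exact: quasi_component_refl.
  exact: quasi_component_connected.
- exact: quasi_component_refl.
- move=> QT; have : quasi_component (~` U) x y by rewrite QT.
  by move/(quasi_component_sub _ _ clU Ux); apply; exact: yU.
Qed.

Hypothesis indT : indecomposable T.

(* A splitting [~` M = B `|` B'] would decompose [T] as [(M `|` B) `|` (M `|` B')]. *)
Lemma indecomposable_connectedC M : subcontinuum M -> M <> setT -> connected (~` M).
Proof.
move=> scM MT; have clM := subcontinuum_closed scM; have [[m Mm] _ conM] := scM.
have proper_piece B B' : ~` M = B `|` B' -> separated B B' -> B' !=set0 ->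
    subcontinuum (M `|` B) /\ M `|` B <> setT.
  move=> MBB' sepB [b' B'b'].
  have BB'0 := separated_disjoint sepB.
  have oMC := closed_openC clM.
  have oB : open B.
    by apply: (separated_open sepB oMC); rewrite MBB' //; exact: subsetUl.
  have oB' : open B'.
    have sepB' : separated B' B by rewrite separatedC.
    by apply: (separated_open sepB' oMC); rewrite MBB' setUC //; exact: subsetUl.
  have MBE : M `|` B = ~` B'.
    apply/seteqP; split => [z [Mz|Bz] B'z|z nB'z].
    - have : (~` M) z by rewrite MBB'; right.
      by apply.
    - by rewrite -[False]/(set0 z) -BB'0.
    - have [Mz|nMz] := pselect (M z); first by left.
      by right; move: (nMz : (~` M) z); rewrite MBB' => -[].
  have clMB : closed (M `|` B) by rewrite MBE; exact: open_closedC.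
  split; last by rewrite MBE => MBT; apply: (_ : (~` B') b') B'b'; rewrite MBT.
  have conMB : connected (M `|` B) by apply: connected_setU_open => //; exists m.
  by apply: closed_subcontinuum => //; exists m; left.
apply/connectedP => E [E0 ME sepE].
have [scMB0 MB0T] := proper_piece _ _ ME sepE (E0 true).
have ME' : ~` M = E true `|` E false by rewrite setUC.
have sepE' : separated (E true) (E false) by rewrite separatedC.
have [scMB1 MB1T] := proper_piece _ _ ME' sepE' (E0 false).
apply: indT; exists (M `|` E false), (M `|` E true); split => //.
apply/seteqP; split => // z _; have [Mz|nMz] := pselect (M z); first by left; left.
by move: (nMz : (~` M) z); rewrite ME => -[E0z|E1z]; [left; right | right; right].
Qed.

Lemma indecomposable_denseC M : subcontinuum M -> M <> setT -> dense (~` M).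
Proof.
move=> scM MT; apply: dense_closureT; apply: contrapT => clMT.
have [z nMz] : ~` M !=set0.
  apply: contrapT => /set0P/negP; rewrite negbK => /eqP M0; apply: MT.
  by rewrite -[M]setCK M0 setC0.
apply: indT; exists M, (closure (~` M)); split => //.
- apply: closed_subcontinuum => //; first exact: closed_closure.
    by exists z; exact: subset_closure.
  exact/connected_closure/indecomposable_connectedC.
- apply/seteqP; split => // y _; have [My|nMy] := pselect (M y); first by left.
  by right; exact: subset_closure.
Qed.

Lemma dense_kappa_of_composantT (x : T) : density_Baire T ->
  (forall y, composant x y) -> exists p, p <> x /\ dense (kappa x p).
Proof.
move=> [D [[dD _] baireD]] /choice [Mf MfP].
have open_denseC d : D d -> open (~` Mf d) /\ dense (~` Mf d).
  have [scM _ MT _] := MfP d; split; last exact: indecomposable_denseC.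
  exact/closed_openC/subcontinuum_closed.
have Tx : [set: T] !=set0 by exists x.
have [p [_ Mfp]] := baireD T D (fun d => ~` Mf d) (card_eqxx D) open_denseC _ Tx openT.
have [d0 [_ Dd0]] := dD _ Tx openT.
exists p; split.
  by move=> px; apply: (Mfp d0 Dd0); rewrite px; have [] := MfP d0.
apply: denseS dD => d Dd; exists (Mf d).
by have [? ? ? ?] := MfP d; split => //; exact: Mfp.
Qed.

End Continuum.

Theorem mainTheorem4 (T : topologicalType) :
  is_continuum T -> indecomposable T -> density_Baire T ->
  forall x : T, exists p : T, p <> x /\ dense (kappa x p).
Proof.
move=> [hT cT conT ntT] indT baireT x.
have [[p [px nCp]] | allC] := pselect (exists p, p <> x /\ ~ composant x p).
  exists p; split => //; apply: denseS (composant_dense hT cT conT x ntT).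
  by move=> y [M [scM Mx MT My]]; exists M; split => // Mp; apply: nCp; exists M.
apply: (dense_kappa_of_composantT hT cT conT indT x baireT) => y.
have [->|yx] := pselect (y = x); first exact: composant_refl.
by apply: contrapT => nCy; apply: allC; exists y.
Qed.
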